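(* In the transactional panorama model with the lenses and metrics described in the context, $I(\mathrm{LCMB}) \ge I(\mathrm{LCNB}) = I(\mathrm{ICNB})$.
   Context: A view graph is a DAG on a set $N$ of nodes (source data and views). Write transactions are processed one at a time; write transaction $w^{t_i}$ creates version $G^{t_i}$ with state set $V^{t_i}$ containing, for each node $n_k$, either its computed new result, a placeholder $UC_k^{t_i}$ if $w^{t_i}$ updates $n_k$ but has not yet computed it, or its result from the previous version if $n_k$ is not updated. A version is committed once all its new results are computed; at any time there is the committed graph (most recently committed version, no UCs) and the latest graph (version of the most recent write transaction). Read transactions $r^{s_1},\dots,r^{s_m}$ each read the views in the current viewport and return immediately a set $H^{s_i}$ of states (results or UCs); $Time(r^{s_i})$ is its return time. A returned state's timestamp is that of its version. Lenses: LCNB returns the viewport states from the more recent of the committed and latest graphs that has zero UCs for the viewport. LCMB: if reading either the committed or the latest graph preserves monotonicity (no view gets a state with smaller timestamp than previously read), behave like LCNB; otherwise read the latest graph. ICNB returns, for each view independently, its most recently computed result. Invisibility for $R=\{r^{s_1},\dots,r^{s_m}\}$: $I(R)=\sum_{i=1}^{m-1}|H^{s_i}_{UC}|\,(Time(r^{s_{i+1}})-Time(r^{s_i}))$, where $H^{s_i}_{UC}$ is the set of UCs in $H^{s_i}$. $I(A)$ denotes invisibility under lens $A$; lenses are compared on the same write transactions, the same order of computing new view results, and the same sequence of read transactions. *)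

From HB Require Import structures.
From mathcomp Require Import all_boot all_order all_algebra.
Set Implicit Arguments. Unset Strict Implicit. Unset Printing Implicit Defensive.
Import Order.TTheory GRing.Theory Num.Theory.

(* A state returned for a node: either the computed result of node k created
   by version j (version 0 = initial, fully computed graph), or the
   placeholder UC_k^{t_j} of write transaction j. *)
Inductive state (N : Type) :=
  | Res of nat & N
  | UC of nat & N.

Definition ts N (x : state N) : nat := match x with Res j _ => j | UC j _ => j end.
Definition is_uc N (x : state N) : bool := if x is UC _ _ then true else false.

Definition acyclic (N : finType) (e : rel N) : Prop :=
  forall k : N, ~~ [exists k', e k k' && connect e k' k].

(* A scenario: a view graph (DAG on N), write transactions w^{t_1..t_W}
   (version i has timestamp rank i; version 0 is the initial committed graph),
   the times at which each new view result is computed, and a sequence of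
   read transactions with their viewports and return times. *)
Record scenario (R : realDomainType) (N : finType) := Scenario {
  edge : rel N;
  edge_acyclic : acyclic edge;
  W : nat;
  upd : nat -> {set N};             (* nodes updated by w^{t_i}, 1 <= i <= W *)
  arr : nat -> R;                   (* time at which w^{t_i} is issued *)
  comp : nat -> N -> R;             (* time at which w^{t_i} computes node k *)
  arr_mono : forall i j, 1 <= i -> i <= j -> j <= W -> (arr i <= arr j)%R;
  comp_after : forall i k, 1 <= i -> i <= W -> k \in upd i -> (arr i <= comp i k)%R;
  nreads : nat;
  rtime : nat -> R;                 (* Time(r^{s_i}), reads indexed 0..m-1 *)
  viewport : nat -> {set N};
  rtime_mono : forall i, i.+1 < nreads -> (rtime i <= rtime i.+1)%R
}.

Section Model.
Variables (R : realDomainType) (N : finType) (S : scenario R N).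
Local Open Scope ring_scope.

(* version whose result node k carries in version i *)
Fixpoint origin (i : nat) (k : N) : nat :=
  match i with
  | 0 => 0
  | i'.+1 => if (i <= W S)%N && (k \in upd S i) then i else origin i' k
  end.

Definition state_at (tau : R) (i : nat) (k : N) : state N :=
  let j := origin i k in
  if (j == 0)%N || (comp S j k <= tau) then Res j k else UC j k.

Definition latest (tau : R) : nat :=
  \max_(i < (W S).+1 | (i == 0 :> nat) || (arr S i <= tau)) i.

Definition no_uc (tau : R) (i : nat) (V : {set N}) : bool :=
  [forall k in V, ~~ is_uc (state_at tau i k)].

Definition committed (tau : R) : nat :=
  \max_(i < (W S).+1 | ((i : nat) <= latest tau)%N && no_uc tau i setT) i.

Definition read_graph (tau : R) (i : nat) : N -> state N := state_at tau i.

Definition lcnb (tau : R) (V : {set N}) : N -> state N :=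
  if no_uc tau (latest tau) V then read_graph tau (latest tau)
  else read_graph tau (committed tau).

Definition computed_by (tau : R) (k : N) (j : nat) : bool :=
  [&& (1 <= j)%N, (j <= W S)%N, k \in upd S j & comp S j k <= tau].

Definition icnb (tau : R) (V : {set N}) : N -> state N := fun k =>
  Res (\max_(j < (W S).+1 | computed_by tau k j &&
          [forall j' : 'I_(W S).+1, computed_by tau k j' ==> (comp S j' k <= comp S j k)]) j) k.

Definition preserves (prev : seq ({set N} * (N -> state N))) (V : {set N})
    (H : N -> state N) : bool :=
  all (fun p => [forall k in V :&: p.1, (ts (p.2 k) <= ts (H k))%N]) prev.

Definition lcmb_step (prev : seq ({set N} * (N -> state N))) (tau : R) (V : {set N})
    : N -> state N :=
  if preserves prev V (read_graph tau (committed tau))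
     && preserves prev V (read_graph tau (latest tau))
  then lcnb tau V else read_graph tau (latest tau).

Fixpoint lcmb_hist (n : nat) : seq ({set N} * (N -> state N)) :=
  match n with
  | 0 => [::]
  | n'.+1 => let prev := lcmb_hist n' in
             rcons prev (viewport S n', lcmb_step prev (rtime S n') (viewport S n'))
  end.

Inductive lens := LCNB | LCMB | ICNB.

(* H^{s_i} under lens A (meaningful on viewport S i) *)
Definition read_result (A : lens) (i : nat) : N -> state N :=
  match A with
  | LCNB => lcnb (rtime S i) (viewport S i)
  | ICNB => icnb (rtime S i) (viewport S i)
  | LCMB => lcmb_step (lcmb_hist i) (rtime S i) (viewport S i)
  end.

Definition num_uc (A : lens) (i : nat) : nat :=
  #|[set k in viewport S i | is_uc (read_result A i k)]|.

Definition invisibility (A : lens) : R :=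
  \sum_(i < (nreads S).-1) (num_uc A i)%:R * (rtime S i.+1 - rtime S i).

End Model.

From mathcomp Require Import all_boot all_order all_algebra.
Import Order.TTheory GRing.Theory Num.Theory.

Set Implicit Arguments.
Unset Strict Implicit.

(* LCNB never returns a placeholder: it reads the latest graph only when that
   graph has no UC on the viewport, and otherwise the committed graph, which
   has no UC at all.  ICNB returns computed results only.  Hence both lenses
   have invisibility 0, while the invisibility of any lens is a sum of
   nonnegative terms because read times are nondecreasing. *)

Section Invisibility.
Variables (R : realDomainType) (N : finType) (S : scenario R N).
Local Open Scope ring_scope.

Lemma committed_no_uc tau k : ~~ is_uc (state_at S tau (committed S tau) k).
Proof.
rewrite /committed.
apply: (big_ind (fun n => forall k, ~~ is_uc (state_at S tau n k))) => //.
- by move=> x y ux uy k'; rewrite /maxn; case: ifP.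
- by move=> i /andP[_ /forallP ui] k'; have := ui k'; rewrite in_setT.
Qed.

Lemma lcnb_no_uc tau (V : {set N}) k : k \in V -> ~~ is_uc (lcnb S tau V k).
Proof.
move=> kV; rewrite /lcnb; case: ifP => [/forall_inP|_]; first exact.
exact: committed_no_uc.
Qed.

Lemma num_uc_eq0 A i :
  {in viewport S i, forall k, ~~ is_uc (read_result S A i k)} ->
  num_uc S A i = 0%N.
Proof.
move=> noUC; apply/eqP; rewrite cards_eq0; apply/eqP/setP => k.
by rewrite !inE; case: (boolP (k \in viewport S i)) => // /noUC /negbTE.
Qed.

Lemma num_uc_LCNB i : num_uc S LCNB i = 0%N.
Proof. by apply: num_uc_eq0 => k; apply: lcnb_no_uc. Qed.

Lemma num_uc_ICNB i : num_uc S ICNB i = 0%N.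
Proof. exact: num_uc_eq0. Qed.

Lemma invisibility_eq0 A : (forall i, num_uc S A i = 0%N) -> invisibility S A = 0.
Proof. by move=> noUC; rewrite /invisibility big1 // => i _; rewrite noUC mul0r. Qed.

Lemma invisibility_ge0 A : 0 <= invisibility S A.
Proof.
apply: sumr_ge0 => i _; rewrite mulr_ge0 // subr_ge0.
by apply: rtime_mono; rewrite -ltn_predRL.
Qed.

End Invisibility.

Theorem theorem2p10 (R : realDomainType) (N : finType) (S : scenario R N) :
  (invisibility S LCNB <= invisibility S LCMB)%R /\
  invisibility S LCNB = invisibility S ICNB.
Proof.
rewrite (invisibility_eq0 (@num_uc_LCNB _ _ S)) (invisibility_eq0 (@num_uc_ICNB _ _ S)).
by split; first exact: invisibility_ge0.
Qed.
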